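(* Let $k\ge 100$ be an integer and let $\alpha_1,\ldots,\alpha_k$ be the roots of $f_k(X)=X^k-X^{k-1}-\cdots-X-1$. Then $$|\alpha_i-\alpha_j|>\frac{1}{k^{3/2}\,3^{k/2}}\qquad\text{for all }1\le i<j\le k.$$
   Context: $f_k(X)=X^k-X^{k-1}-\cdots-X-1$; its roots are distinct. *)

From mathcomp Require Import all_boot all_order all_algebra all_field.
Set Implicit Arguments. Unset Strict Implicit. Unset Printing Implicit Defensive.
Import Order.TTheory GRing.Theory Num.Theory.
Local Open Scope ring_scope.

Definition fk (k : nat) : {poly algC} := 'X^k - \sum_(i < k) 'X^i.

From mathcomp Require Import all_boot all_order all_algebra all_field.
From mathcomp Require Import lra ring zify.
Set Implicit Arguments. Unset Strict Implicit. Unset Printing Implicit Defensive.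
Import Order.TTheory GRing.Theory Num.Theory.
Local Open Scope ring_scope.

(* Since (X - 1) f_k = 1 - X^k (2 - X), every root a of f_k satisfies g(a) = 1
   for g(x) = x^k (2 - x).  For roots a != b with |b| <= |a|, g(a) = g(b) makes
   -g'(a)(b - a) equal to the second-order Taylor remainder of g at a, and
   g'(a) = -a^(k-1) ((k+1)a - 2k); bounding the remainder gives
   |(k+1)a - 2k| <= 8k(k+1)|b - a| once 1/3 <= |a| < 3.  On the other hand
   |(k+1)a - 2k| > 1/k, for otherwise a is so close to 2k/(k+1) that, by
   Bernoulli's inequality, |g(a)| >= 2^(k-1)/(k+1)^2 > 1.  Hence
   |a - b| > 1/(8k^2(k+1)), which beats the claimed bound because
   (8k(k+1))^2 <= 3^k. *)

Lemma bin2_mul2 n : ('C(n, 2) * 2 = n * n.-1)%N.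
Proof. by rewrite -[X in (_ * X)%N]/(2`!) bin_ffact ffactnS ffactn1. Qed.

Lemma sqr_lt_exp2 k : (8 <= k)%N -> (2 * k.+1 ^ 2 < 2 ^ k)%N.
Proof.
elim: k => [//|k IH]; rewrite leq_eqVlt => /orP [/eqP <- //|].
rewrite ltnS => le8k; have lt_k := IH le8k; rewrite [(2 ^ _)%N]expnS.
have : (k.+2 ^ 2 <= 2 * k.+1 ^ 2)%N by rewrite !expnS !expn0; nia.
by move: lt_k; move: (2 ^ k)%N (k.+1 ^ 2)%N (k.+2 ^ 2)%N => x y z; lia.
Qed.

Lemma sqr_le_exp3 k : (14 <= k)%N -> ((8 * k * k.+1) ^ 2 <= 3 ^ k)%N.
Proof.
elim: k => [//|k IH]; rewrite leq_eqVlt => /orP [/eqP <-|]; first by lia.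
rewrite ltnS => le14k; have le_k := IH le14k; rewrite [(3 ^ _)%N]expnS.
apply: leq_trans (leq_mul (leqnn 3) le_k).
rewrite -mulnA [(8 * k * _)%N]mulnAC -[(8 * k.+1 * k)%N]mulnA !expnMn mulnA.
rewrite [(3 * _)%N]mulnC -!mulnA leq_mul2l; apply/orP; right.
by rewrite leq_mul2l; apply/orP; right; rewrite !expnS !expn0; nia.
Qed.

Section TaylorRemainder.
Variable R : comPzRingType.

Definition taylor_remX (m : nat) (a b : R) := b ^+ m - a ^+ m - m%:R * a ^+ m.-1 * (b - a).

Lemma taylor_remX1 a b : taylor_remX 1 a b = 0.
Proof. by rewrite /taylor_remX /=; ring. Qed.

Lemma taylor_remXS m a b :
  taylor_remX m.+2 a b = b * taylor_remX m.+1 a b + m.+1%:R * a ^+ m * (b - a) ^+ 2.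
Proof.
rewrite /taylor_remX [m.+2%:R]mulrS /=.
by move: m.+1%:R => n; rewrite !exprS; ring.
Qed.

End TaylorRemainder.

Lemma norm_taylor_remX_le (R : numDomainType) m (a b c : R) :
  `|a| <= c -> `|b| <= c ->
  `|taylor_remX m.+2 a b| <= 'C(m.+2, 2)%:R * `|b - a| ^+ 2 * c ^+ m.
Proof.
move=> le_ac le_bc; have c_ge0 : 0 <= c := le_trans (normr_ge0 a) le_ac.
elim: m => [|m IH].
  by rewrite taylor_remXS taylor_remX1 mulr0 add0r !expr0 !mulr1 mul1r normrX binn mul1r.
rewrite taylor_remXS binS bin1 (natrD _ 'C(m.+2, 2)).
apply: le_trans (ler_normD _ _) _.
rewrite [in X in _ <= X]mulrDl [in X in _ <= X]mulrDl; apply: lerD.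
  by rewrite normrM [c ^+ m.+1]exprS mulrCA; apply: ler_pM.
rewrite normrM normrM normr_nat !normrX mulrAC.
apply: ler_wpM2l; first by rewrite mulr_ge0 ?exprn_ge0.
by rewrite lerXn2r ?nnegrE.
Qed.

(* With k = m + 2 and g = 2 X^k - X^(k+1), the left side is -g'(a)(b - a) and
   the right side is the second-order Taylor remainder of g at a, evaluated at b. *)
Lemma taylor_remX_root_gap (R : comPzRingType) m (a b : R) :
  a ^+ m.+2 * (2 - a) = b ^+ m.+2 * (2 - b) ->
  a ^+ m.+1 * (m.+3%:R * a - 2 * m.+2%:R) * (b - a) =
    2 * taylor_remX m.+2 a b - taylor_remX m.+3 a b.
Proof.
move=> gab; rewrite -[LHS]addr0 -(subrr (a ^+ m.+2 * (2 - a))) {1}gab.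
by rewrite /taylor_remX [m.+3%:R]mulrS /=; move: m.+2%:R => n; rewrite !exprS; ring.
Qed.

Lemma norm_root_gap_le (R : numDomainType) m (a b : R) :
  a ^+ m.+2 * (2 - a) = b ^+ m.+2 * (2 - b) -> `|b| <= `|a| -> a != b ->
  `|a| * `|m.+3%:R * a - 2 * m.+2%:R| <=
    `|b - a| * (2 * 'C(m.+2, 2)%:R + 'C(m.+3, 2)%:R * `|a|).
Proof.
move=> gab le_ba neq_ab.
have [->|a_neq0] := eqVneq a 0.
  by rewrite normr0 mul0r mulr_ge0 ?addr_ge0 ?mulr_ge0.
have pos : 0 < `|a| ^+ m * `|b - a|.
  by rewrite mulr_gt0 ?exprn_gt0 ?normr_gt0 // subr_eq0 eq_sym.
rewrite -(ler_pM2l pos).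
have := ler_normB (2 * taylor_remX m.+2 a b) (taylor_remX m.+3 a b).
rewrite -taylor_remX_root_gap // normrM normrM normrX normrM normr_nat.
move=> bound_gap; apply: le_trans (le_trans _ bound_gap) _.
  by rewrite exprS le_eqVlt; apply/orP; left; apply/eqP; ring.
apply: le_trans (lerD (ler_wpM2l _ (norm_taylor_remX_le m (lexx _) le_ba))
                      (norm_taylor_remX_le m.+1 (lexx _) le_ba)) _ => //.
by rewrite [`|a| ^+ m.+1]exprS le_eqVlt; apply/orP; left; apply/eqP; ring.
Qed.

Section RealBounds.
Variable R : realFieldType.

Lemma bernoulli_ineq (h : R) m : -1 <= h -> 1 + m%:R * h <= (1 + h) ^+ m.
Proof.
move=> ge_h; elim: m => [|m IH]; first by rewrite mul0r addr0 expr0.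
have sqr_ge0 : 0 <= m%:R * h ^+ 2 by rewrite mulr_ge0 ?ler0n ?sqr_ge0.
rewrite exprSr -[m.+1]addn1 natrD; nra.
Qed.

Lemma root_norm_bounds (r w : R) k : (0 < k)%N ->
  0 <= r -> 0 <= w -> r ^+ k * w = 1 -> w <= 2 + r -> r <= 2 + w -> 3^-1 <= r < 3.
Proof.
case: k => // k _ ge0_r ge0_w rkw le_w le_r; rewrite exprS in rkw.
apply/andP; split.
  have [lt_r1|] := ltP r 1; last lra.
  have le_rk : r ^+ k <= 1 by rewrite exprn_ile1 // ltW.
  have : r * r ^+ k * w <= r * w by rewrite -mulrA ler_wpM2l // ler_piMl.
  nra.
rewrite ltNge; apply/negP => ge_r3.
have ge_rk : 1 <= r ^+ k by rewrite exprn_ege1 //; lra.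
have : 3 <= r * r ^+ k by nra.
nra.
Qed.

(* If k u <= 1, then k (1 - r/2) <= 1 - 1/(2(k+1)), so Bernoulli gives
   r^k >= 2^k / (2(k+1)), while w >= 1/(k+1); the product r^k w exceeds 1. *)
Lemma root_deriv_gt (r w u : R) k : (8 <= k)%N ->
  0 <= r -> 0 <= w -> 0 <= u -> r ^+ k * w = 1 ->
  2 - u <= k.+1%:R * w -> 2 * k%:R - u <= k.+1%:R * r -> 1 < k%:R * u.
Proof.
move=> ge8_k ge0_r ge0_w ge0_u rkw le_w le_r.
rewrite ltNge; apply/negP => le_u.
have k_ge8 : 8 <= k%:R :> R by rewrite (ler_nat R 8).
have kS : k.+1%:R = k%:R + 1 :> R by rewrite -addn1 natrD.
have exp2_gt : 2 * k.+1%:R ^+ 2 < 2 ^+ k :> R.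
  by rewrite -natrX -natrM -natrX ltr_nat sqr_lt_exp2.
have := @bernoulli_ineq (r / 2 - 1) k.
rewrite [1 + (_ - 1)]addrC subrK expr_div_n => bern.
have {bern} : 1 <= 2 * k.+1%:R * (r ^+ k / 2 ^+ k).
  rewrite kS in le_r *; have := bern (ltac:(lra)); nra.
rewrite mulrA ler_pdivlMr ?exprn_gt0 // mul1r => le_exp2.
have : 1 <= k.+1%:R * w by rewrite kS in le_w *; nra.
by rewrite kS in exp2_gt le_exp2 *; nra.
Qed.

(* Read r, w, u, d as |a|, |2 - a|, |(k+1)a - 2k| and |b - a|. *)
Lemma root_gap_gt (r w u d : R) k : (8 <= k)%N ->
  0 <= r -> 0 <= w -> 0 <= u -> 0 <= d ->
  r ^+ k * w = 1 -> w <= 2 + r -> r <= 2 + w ->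
  2 - u <= k.+1%:R * w -> 2 * k%:R - u <= k.+1%:R * r ->
  r * u <= d * (2 * 'C(k, 2)%:R + 'C(k.+1, 2)%:R * r) ->
  1 < 8 * k%:R ^+ 2 * k.+1%:R * d.
Proof.
move=> ge8_k ge0_r ge0_w ge0_u ge0_d rkw le_w le_r le_wu le_ru le_gap.
have k_gt0 : (0 < k)%N by lia.
have /andP[ge_r lt_r3] := root_norm_bounds k_gt0 ge0_r ge0_w rkw le_w le_r.
have gt_ku := root_deriv_gt ge8_k ge0_r ge0_w ge0_u rkw le_wu le_ru.
have le_bin : 3 * (2 * 'C(k, 2)%:R + 3 * 'C(k.+1, 2)%:R) <= 8 * k%:R * k.+1%:R :> R.
  rewrite -!natrM -natrD -natrM ler_nat.
  by have := bin2_mul2 k; have := bin2_mul2 k.+1; nia.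
have le_gap3 : d * (2 * 'C(k, 2)%:R + 'C(k.+1, 2)%:R * r) <=
               d * (2 * 'C(k, 2)%:R + 3 * 'C(k.+1, 2)%:R).
  by rewrite ler_wpM2l // lerD2l [_ * r]mulrC ler_wpM2r ?ler0n // ltW.
have le_u : u <= 8 * k%:R * k.+1%:R * d.
  have : d * (3 * (2 * 'C(k, 2)%:R + 3 * 'C(k.+1, 2)%:R)) <= d * (8 * k%:R * k.+1%:R).
    exact: ler_wpM2l.
  nra.
have := ler_wpM2l (ler0n R k) le_u.
by rewrite expr2; lra.
Qed.

End RealBounds.

Lemma root_fk k (a : algC) : root (fk k) a -> a ^+ k * (2 - a) = 1.
Proof.
rewrite /root /fk hornerD hornerN horner_sum hornerXn.
under eq_bigr do rewrite hornerXn.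
move=> /eqP fa; have : (a - 1) * (a ^+ k - \sum_(i < k) a ^+ i) = 0 by rewrite fa mulr0.
by rewrite mulrBr -subrX1 => ga; rewrite -[RHS]subr0 -ga; ring.
Qed.

(* The real-variable estimates are transported along algR, the real subfield
   of algC, where lra and nra are available. *)
Definition normR (z : algC) : algR := in_algR (normr_real z).

Definition algRvalE := (rmorph_nat algRval, rmorphXn algRval, rmorph1 algRval,
  rmorph0 algRval, rmorphB algRval, rmorphD algRval, rmorphM algRval).

Lemma algR_leE (x y : algR) : (x <= y) = (algRval x <= algRval y). Proof. by []. Qed.
Lemma algR_ltE (x y : algR) : (x < y) = (algRval x < algRval y). Proof. by []. Qed.

Lemma fk_root_gap_gt k (a b : algC) : (8 <= k)%N ->
  root (fk k) a -> root (fk k) b -> `|b| <= `|a| -> a != b ->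
  1 < 8 * k%:R ^+ 2 * k.+1%:R * `|b - a|.
Proof.
case: k => [|[|m]] // ge8_m fa fb le_ba neq_ab.
have ga := root_fk fa; have gb := root_fk fb.
have gap := norm_root_gap_le (etrans ga (esym gb)) le_ba neq_ab.
set t := m.+3%:R * a - 2 * m.+2%:R in gap.
suff : 1 < 8 * m.+2%:R ^+ 2 * m.+3%:R * normR (b - a).
  by rewrite algR_ltE ?algRvalE; apply.
apply: (root_gap_gt (r := normR a) (w := normR (2 - a)) (u := normR t) ge8_m);
  try apply: val_inj; rewrite ?algR_leE ?algRvalE /=.
all: try exact: normr_ge0.
- by rewrite -normrX -normrM ga normr1.
- by have := ler_normB 2 a; rewrite normr_nat.
- by have := ler_normD (a - 2) 2; rewrite subrK distrC normr_nat addrC.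
- rewrite -[m.+3%:R]normr_nat -normrM (_ : m.+3%:R * (2 - a) = 2 - t);
    last by rewrite /t [m.+3%:R]mulrS; ring.
  by have := lerB_normD 2 (- t); rewrite normrN normr_nat.
- rewrite -[m.+3%:R]normr_nat -normrM (_ : m.+3%:R * a = 2 * m.+2%:R + t);
    last by rewrite /t; ring.
  by have := lerB_normD (2 * m.+2%:R) t; rewrite normrM !normr_nat.
- exact: gap.
Qed.

Lemma sqrtC3X_ge k : (14 <= k)%N -> 8 * k%:R * k.+1%:R <= sqrtC 3 ^+ k :> algC.
Proof.
move=> ge14_k.
rewrite -(ler_pXn2r (_ : 0 < 2)%N) ?nnegrE ?exprn_ge0 ?sqrtC_ge0 ?mulr_ge0 ?ler0n //.
by rewrite -exprM mulnC exprM sqrtCK -!natrM -!natrX ler_nat sqr_le_exp3.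
Qed.

Theorem mainTheorem3 (k : nat) (a b : algC) :
  (100 <= k)%N -> root (fk k) a -> root (fk k) b -> a != b ->
  `|a - b| > 1 / (k%:R * sqrtC k%:R * sqrtC 3 ^+ k).
Proof.
move=> ge100_k; wlog le_ba : a b / `|b| <= `|a|.
  move=> gap fa fb neq_ab.
  have /orP[le|le] := real_leVge (normr_real b) (normr_real a); first exact: gap.
  by rewrite distrC gap // eq_sym.
move=> fa fb neq_ab.
have [ge8_k ge14_k] : (8 <= k)%N /\ (14 <= k)%N by split; lia.
have gap := fk_root_gap_gt ge8_k fa fb le_ba neq_ab.
have ge_sqrt3 := sqrtC3X_ge ge14_k.
have ge1_sqrtk : 1 <= sqrtC k%:R :> algC.
  by rewrite -{1}sqrtC1 ler_sqrtC ?nnegrE ?ler01 ?ler0n // ler1n; lia.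
have k_gt0 : 0 < k%:R :> algC by rewrite ltr0n; lia.
rewrite distrC ltr_pdivrMr ?mul1r; last first.
  by rewrite !mulr_gt0 ?exprn_gt0 ?sqrtC_gt0 ?ltr0Sn.
apply: lt_le_trans gap _; rewrite mulrC ler_wpM2l //.
rewrite expr2 -!mulrA mulrCA ler_pM2l // !mulrA -[X in X <= _]mul1r.
by apply: ler_pM; rewrite ?mulr_ge0 ?ler0n.
Qed.
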